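(* Let $(G,v)$ be a Hamel space over an ordered field $C$, let $\alpha\in v(G\setminus\{0\})$, let $P$ be an $\alpha$-cut, and let $P'\subseteq G$ be a downward closed subset of $(G,<_0)$. Then there are an extension $(G',v')$ of $(G,v)$ and an element $h\in G'$ such that (1) $P'<_0h<_0G\setminus P'$; (2) $v'(h)=\alpha$; (3) $P<_1h<_1\overline{B}(\alpha)\setminus P$; and (4) for any embedding of Hamel spaces $i:(G,v)\to(G^*,v^* )$ and any $h^*\in G^*$ such that (a) $i(P')<_0h^*<_0i(G\setminus P')$, (b) for all $g\in G$ and $c\in C$, $v^*(i(g)+ch^* )=\min_0(v^*(i(g)),i(\alpha))$ if $c\neq0$ and $v^*(i(g)+ch^* )=v^*(i(g))$ if $c=0$, and (c) $i(P)<_1h^*<_1 i(\overline{B}(\alpha)\setminus P)$, there is an extension of $i$ to an embedding $(G',v')\to(G^*,v^* )$ sending $h$ to $h^*$.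
   Context: Let $C$ be an ordered field. A $2$-ordered $C$-vector space is a $C$-vector space $G$ with two total orderings $<_0,<_1$ such that $G$ is an ordered $C$-vector space with respect to each. Put $G_\infty=G\cup\{\infty\}$, with $G<_0\infty$, $G<_1\infty$. A Hamel valuation on $G$ is a map $v:G\to G_\infty$ such that for all $x,y\in G$ and $\lambda\in C^{\times}$: $v(x)=\infty$ iff $x=0$; $v(x+y)\ge_0\min_0(v(x),v(y))$; $v(\lambda x)=v(x)$; if $0<_1x<_1y$ then $v(x)\ge_0v(y)$; $v(v(x))=v(x)$ (with $v(\infty)=\infty$); and $v(x)>_10$. A Hamel space is such a pair $(G,v)$. $(G',v')$ is an extension of $(G,v)$ if $G$ is a $C$-subspace of $G'$, both orderings on $G$ are restrictions of those on $G'$, and $v'|_G=v$. An embedding $i:(G,v)\to(G',v')$ is an injective $C$-linear map preserving $<_0$ and $<_1$ with $i(v(x))=v'(i(x))$. For $\alpha\in v(G\setminus\{0\})$, let $\overline{B}(\alpha)=\{g\in G:v(g)\ge_0\alpha\}$ and $B(\alpha)=\{g\in G:v(g)>_0\alpha\}$. An $\alpha$-cut is a subset $P\subseteq\overline{B}(\alpha)$ which is downward closed in $(\overline{B}(\alpha),<_1)$ and such that for all $x,y\in\overline{B}(\alpha)$ with $x-y\in B(\alpha)$, $x\in P$ iff $y\in P$. *)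

From HB Require Import structures.
From mathcomp Require Import all_boot all_order all_algebra.
Set Implicit Arguments. Unset Strict Implicit. Unset Printing Implicit Defensive.
Import Order.TTheory GRing.Theory Num.Theory.
Local Open Scope ring_scope.

(* The ordered field C is a [realFieldType]; a C-vector space is an [lmodType C].
   Orders on G are boolean strict relations; G_oo = option G with None = oo. *)

Section Defs.
Variable C : realFieldType.

Definition strict_total_order (G : Type) (lt : rel G) : Prop :=
  [/\ (forall x, ~~ lt x x),
      (forall x y z, lt x y -> lt y z -> lt x z) &
      (forall x y, [\/ lt x y, x = y | lt y x])].

Definition ordered_vs (G : lmodType C) (lt : rel G) : Prop :=
  [/\ strict_total_order lt,
      (forall x y z : G, lt x y -> lt (x + z) (y + z)) &
      (forall (c : C) (x : G), 0 < c -> lt 0 x -> lt 0 (c *: x))].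

Definition two_ordered (G : lmodType C) (lt0 lt1 : rel G) : Prop :=
  ordered_vs lt0 /\ ordered_vs lt1.

Definition olt (G : Type) (lt : rel G) (a b : option G) : bool :=
  match a, b with
  | Some x, Some y => lt x y
  | Some _, None => true
  | None, _ => false
  end.

Definition ole (G : eqType) (lt : rel G) (a b : option G) : bool :=
  (a == b) || olt lt a b.

Definition omin (G : Type) (lt : rel G) (a b : option G) : option G :=
  if olt lt a b then a else b.

Definition vext (G : Type) (v : G -> option G) (a : option G) : option G :=
  match a with Some x => v x | None => None end.

Definition hamel_valuation (G : lmodType C) (lt0 lt1 : rel G)
    (v : G -> option G) : Prop :=
  (forall x, v x = None <-> x = 0) /\
  [/\ (forall x y, ole lt0 (omin lt0 (v x) (v y)) (v (x + y))),
      (forall (c : C) x, c != 0 -> v (c *: x) = v x),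
      (forall x y, lt1 0 x -> lt1 x y -> ole lt0 (v y) (v x)),
      (forall x, vext v (v x) = v x) &
      (forall x, olt lt1 (Some 0) (v x))].

Definition hamel_space (G : lmodType C) (lt0 lt1 : rel G) (v : G -> option G) :=
  two_ordered lt0 lt1 /\ hamel_valuation lt0 lt1 v.

Definition is_linear (G H : lmodType C) (f : G -> H) : Prop :=
  forall (c : C) (x y : G), f (c *: x + y) = c *: f x + f y.

Definition hamel_embedding (G : lmodType C) (lt0 lt1 : rel G) (v : G -> option G)
    (H : lmodType C) (lt0' lt1' : rel H) (v' : H -> option H) (f : G -> H) : Prop :=
  [/\ injective f, is_linear f,
      (forall x y, lt0 x y -> lt0' (f x) (f y)),
      (forall x y, lt1 x y -> lt1' (f x) (f y)) &
      (forall x, v' (f x) = omap f (v x))].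

Definition cball (G : lmodType C) (lt0 : rel G) (v : G -> option G) (a : G) (g : G) :=
  ole lt0 (Some a) (v g).
Definition oball (G : lmodType C) (lt0 : rel G) (v : G -> option G) (a : G) (g : G) :=
  olt lt0 (Some a) (v g).

Definition alpha_cut (G : lmodType C) (lt0 lt1 : rel G) (v : G -> option G)
    (a : G) (P : G -> Prop) : Prop :=
  [/\ (forall x, P x -> cball lt0 v a x),
      (forall x y, cball lt0 v a x -> cball lt0 v a y -> lt1 y x -> P x -> P y) &
      (forall x y, cball lt0 v a x -> cball lt0 v a y -> oball lt0 v a (x - y) ->
         (P x <-> P y))].

Definition down_closed (G : Type) (lt : rel G) (P : G -> Prop) : Prop :=
  forall x y, lt y x -> P x -> P y.

End Defs.

From HB Require Import structures.
From mathcomp Require Import all_boot all_order all_algebra.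
From mathcomp Require Import boolp.
Import Order.TTheory GRing.Theory Num.Theory.
Local Open Scope ring_scope.
Set Implicit Arguments. Unset Strict Implicit. Unset Printing Implicit Defensive.

(* G' is G + C h.  Each order of G' is obtained by letting h realise a cut of G:
   for <_0 the cut P', for <_1 the cut Q made of P inside the closed ball Bbar(alpha)
   and of the negative elements outside it.  An element g + c h with c <> 0 is positive
   iff -g/c lies on the correct side of the cut; since cuts are downward closed
   this is a total vector-space order.  The valuation is v'(g + c h) = min(v g, alpha)
   for c <> 0.  Its monotonicity for <_1 is the only delicate Hamel axiom: it
   reduces to the fact that adding an element of valuation > min(v p, alpha) never
   moves p across Q, which inside Bbar(alpha) is exactly the alpha-cut property of P.
   Given h* as in (4), the map g + c h |-> i(g) + c h* is strictly monotone for a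
   total order, hence injective, and it preserves valuations by (b). *)

Section OrderedVectorSpace.
Variables (C : realFieldType) (G : lmodType C) (lt : rel G).

Definition nonneg (x : G) : Prop := lt 0 x \/ x = 0.

Hypothesis ovs : ordered_vs lt.

Lemma ovs_ltxx x : ~ lt x x.
Proof. by case: ovs => [[/(_ x)/negP]]. Qed.

Lemma ovs_lt_trans x y z : lt x y -> lt y z -> lt x z.
Proof. by case: ovs => [[_ + _] _ _]; apply. Qed.

Lemma ovs_lt_total x y : [\/ lt x y, x = y | lt y x].
Proof. by case: ovs => [[_ _ +] _ _]; apply. Qed.

Lemma ovs_lt_asym x y : lt x y -> ~ lt y x.
Proof. by move=> xy /(ovs_lt_trans xy); apply: ovs_ltxx. Qed.

Lemma ovs_ltD2r x y z : lt x y -> lt (x + z) (y + z).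
Proof. by case: ovs => _ + _; apply. Qed.

Lemma ovs_subr_gt0 x y : lt 0 (y - x) <-> lt x y.
Proof.
split=> [/(ovs_ltD2r x)|/(ovs_ltD2r (- x))]; first by rewrite add0r subrK.
by rewrite subrr.
Qed.

Lemma ovs_oppr_gt0 x : lt 0 (- x) <-> lt x 0.
Proof. by rewrite -(ovs_subr_gt0 x 0) sub0r. Qed.

Lemma ovs_nlt0_gt0 x : x != 0 -> ~ lt x 0 <-> lt 0 x.
Proof.
move=> /eqP x0; split=> [nx0|/ovs_lt_asym//].
by case: (ovs_lt_total x 0).
Qed.

Lemma ovs_addr_gt0 a b : lt 0 a -> lt 0 b -> lt 0 (a + b).
Proof.
by move=> a0 /(ovs_ltD2r a); rewrite add0r [b + a]addrC; apply: ovs_lt_trans.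
Qed.

Lemma ovs_addr_gt0_ge0 a b : lt 0 a -> nonneg b -> lt 0 (a + b).
Proof. by move=> a0 [b0|->]; [exact: ovs_addr_gt0|rewrite addr0]. Qed.

Lemma ovs_nonnegD a b : nonneg a -> nonneg b -> nonneg (a + b).
Proof. by case=> [a0 b0|->]; [left; exact: ovs_addr_gt0_ge0|rewrite add0r]. Qed.

Lemma ovs_scaler_gt0 c x : 0 < c -> lt 0 x -> lt 0 (c *: x).
Proof. by case: ovs => _ _; apply. Qed.

Lemma ovs_scaler_gt0E c x : 0 < c -> lt 0 (c *: x) <-> lt 0 x.
Proof.
move=> c0; split; last exact: ovs_scaler_gt0.
have c'0 : 0 < c^-1 by rewrite invr_gt0.
by move/(ovs_scaler_gt0 c'0); rewrite scalerA mulVf ?scale1r // gt_eqF.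
Qed.

Lemma ovs_nonnegZ c x : 0 <= c -> nonneg x -> nonneg (c *: x).
Proof.
rewrite le_eqVlt => /predU1P[<- _|c0]; first by right; rewrite scale0r.
by case=> [x0|->]; [left; exact: ovs_scaler_gt0|right; rewrite scaler0].
Qed.

Lemma ovs_nonnegZE c x : 0 < c -> nonneg (c *: x) <-> nonneg x.
Proof.
move=> c0; rewrite /nonneg (ovs_scaler_gt0E _ c0).
split=> -[x0|e]; [by left| |by left|by right; rewrite e scaler0].
by right; apply/eqP; move/eqP: e; rewrite scaler_eq0 gt_eqF.
Qed.

Lemma ovs_nonneg_subr x y : nonneg (y - x) <-> lt x y \/ x = y.
Proof.
rewrite /nonneg ovs_subr_gt0; split=> -[xy|]; [by left| |by left|].
- by move/eqP; rewrite subr_eq0 => /eqP->; right.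
- by move->; right; rewrite subrr.
Qed.

Lemma ovs_max2 (R : G -> Prop) q1 q2 : R q1 -> R q2 ->
  exists2 q, R q & nonneg (q - q1) /\ nonneg (q - q2).
Proof.
move=> R1 R2; have refl q : nonneg (q - q) by right; rewrite subrr.
case: (ovs_lt_total q1 q2) => [q12|<-|q21]; [exists q2|exists q1|exists q1] => //.
all: by split=> //; apply/ovs_nonneg_subr; left.
Qed.

Lemma ovs_min2 (R : G -> Prop) q1 q2 : R q1 -> R q2 ->
  exists2 q, R q & nonneg (q1 - q) /\ nonneg (q2 - q).
Proof.
move=> R1 R2; have refl q : nonneg (q - q) by right; rewrite subrr.
case: (ovs_lt_total q1 q2) => [q12|<-|q21]; [exists q1|exists q1|exists q2] => //.
all: by split=> //; apply/ovs_nonneg_subr; left.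
Qed.

Let addrZ_shift (g q q' : G) (c : C) : g + c *: q' = (g + c *: q) + c *: (q' - q).
Proof. by rewrite scalerBr [RHS]addrA [RHS]addrAC addrK. Qed.

Lemma ovs_addrZ_nonneg_le (g q q' : G) (c : C) : 0 <= c ->
  nonneg (g + c *: q) -> nonneg (q' - q) -> nonneg (g + c *: q').
Proof.
move=> c0 gq qq'; rewrite (addrZ_shift g q).
exact: ovs_nonnegD gq (ovs_nonnegZ c0 qq').
Qed.

Lemma ovs_addrZ_nonneg_ge (g q q' : G) (c : C) : c <= 0 ->
  nonneg (g + c *: q) -> nonneg (q - q') -> nonneg (g + c *: q').
Proof.
move=> c0 gq q'q; have nc0 : 0 <= - c by rewrite oppr_ge0.
rewrite (addrZ_shift g q) -opprB scalerN -scaleNr.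
exact: ovs_nonnegD gq (ovs_nonnegZ nc0 q'q).
Qed.

Lemma ovs_addrZ_gt0_lt (g q q' : G) (c : C) : 0 < c ->
  nonneg (g + c *: q) -> lt q q' -> lt 0 (g + c *: q').
Proof.
move=> c0 gq /ovs_subr_gt0 qq'; rewrite (addrZ_shift g q) addrC.
exact: ovs_addr_gt0_ge0 (ovs_scaler_gt0 c0 qq') gq.
Qed.

End OrderedVectorSpace.

Section OptionOrder.
Variables (G : eqType) (lt : rel G).

Lemma ole_refl a : ole lt a a.
Proof. by rewrite /ole eqxx. Qed.

Lemma olt_ole a b : olt lt a b -> ole lt a b.
Proof. by rewrite /ole => ->; rewrite orbT. Qed.

Lemma oleP a b : ole lt a b <-> a = b \/ olt lt a b.
Proof. by rewrite /ole; split=> [/orP[/eqP|]|[->|->]]; rewrite ?eqxx ?orbT; auto. Qed.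

Lemma omin_r a b : ole lt (omin lt a b) b.
Proof. by rewrite /omin; case: ifP => [/olt_ole|_] //; apply: ole_refl. Qed.

Lemma omin_glb a b c : ole lt c a -> ole lt c b -> ole lt c (omin lt a b).
Proof. by rewrite /omin; case: ifP. Qed.

Hypothesis sto : strict_total_order lt.

Lemma olt_irr a : ~~ olt lt a a.
Proof. by case: sto a => irr _ _ [x|] //=; apply: irr. Qed.

Lemma olt_trans a b c : olt lt a b -> olt lt b c -> olt lt a c.
Proof. by case: sto a b c => _ tr _ [x|] [y|] [z|] //=; apply: tr. Qed.

Lemma olt_ole_trans a b c : olt lt a b -> ole lt b c -> olt lt a c.
Proof. by move=> ab /oleP[<-//|]; apply: olt_trans. Qed.

Lemma ole_trans a b c : ole lt a b -> ole lt b c -> ole lt a c.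
Proof.
move=> /oleP[->//|ab] bc; exact/olt_ole/(olt_ole_trans ab bc).
Qed.

Lemma ole_total a b : ole lt a b \/ olt lt b a.
Proof.
case: sto a b => _ _ tri [x|] [y|] /=; last 3 first.
- by left; apply: olt_ole.
- by right.
- by left; apply: ole_refl.
by case: (tri x y) => [xy|->|]; [left; apply: olt_ole|left; apply: ole_refl|right].
Qed.

Lemma olt_nle a b : olt lt a b -> ~ ole lt b a.
Proof. by move=> ab /(olt_ole_trans ab); apply/negP/olt_irr. Qed.

Lemma nole_olt a b : ~ ole lt a b -> olt lt b a.
Proof. by case: (ole_total a b). Qed.

Lemma omin_l a b : ole lt (omin lt a b) a.
Proof.
rewrite /omin; case: ifP => [_|/negbT]; first exact: ole_refl.
by case: (ole_total b a) => // ->.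
Qed.

Lemma omin_mono a b a' b' :
  ole lt a a' -> ole lt b b' -> ole lt (omin lt a b) (omin lt a' b').
Proof.
move=> aa' bb'; apply: omin_glb.
- exact: ole_trans (omin_l _ _) aa'.
- exact: ole_trans (omin_r _ _) bb'.
Qed.

Lemma omin_Some a b : omin lt a (Some b) <> None.
Proof. by rewrite /omin; case: ifP => //; case: a. Qed.

Lemma olt_omin a b c : olt lt a (omin lt b c) -> olt lt a b /\ olt lt a c.
Proof. by move=> h; split; apply: olt_ole_trans h _; [apply: omin_l|apply: omin_r]. Qed.

Lemma olt_omin2 a b c : olt lt (omin lt a c) (omin lt b c) -> olt lt a c /\ olt lt a b.
Proof.
rewrite {1}/omin; case: ifP => [ac /olt_omin[]//|_ /olt_omin[_]].
by move/olt_nle; case; apply: ole_refl.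
Qed.

End OptionOrder.

Section OrderMorphism.
Variables (A B : Type) (lta : rel A) (ltb : rel B) (f : A -> B).
Hypotheses (stoa : strict_total_order lta) (stob : strict_total_order ltb).
Hypothesis f_homo : {homo f : x y / lta x y >-> ltb x y}.

Lemma homo_total_mono : {mono f : x y / lta x y >-> ltb x y}.
Proof.
case: stoa stob => _ _ tri [irr tr _] x y; apply/idP/idP; last exact: f_homo.
case: (tri x y) => [//|->|/f_homo yx xy]; first by rewrite (negbTE (irr _)).
by have := tr _ _ _ xy yx; rewrite (negbTE (irr _)).
Qed.

Lemma homo_total_inj : injective f.
Proof.
case: stoa stob => _ _ tri [irr _ _] x y fxy.
by case: (tri x y) => [/f_homo|//|/f_homo]; rewrite fxy (negbTE (irr _)).
Qed.

End OrderMorphism.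

Section OptionMap.
Variables (A B : eqType) (lta : rel A) (ltb : rel B) (f : A -> B).
Hypothesis f_mono : {mono f : x y / lta x y >-> ltb x y}.

Lemma omap_olt a b : olt ltb (omap f a) (omap f b) = olt lta a b.
Proof. by case: a b => [x|] [y|] //=. Qed.

Lemma omap_omin a b : omap f (omin lta a b) = omin ltb (omap f a) (omap f b).
Proof. by rewrite /omin omap_olt; case: ifP. Qed.

Lemma omap_ole : injective f -> forall a b, ole ltb (omap f a) (omap f b) = ole lta a b.
Proof.
move=> f_inj a b; rewrite /ole omap_olt; congr orb.
by case: a b => [x|] [y|] //=; apply/eqP/eqP => [[/f_inj->]|[->]].
Qed.

End OptionMap.

Section LinearMaps.
Variables (C : realFieldType) (G H : lmodType C) (f : G -> H).
Hypothesis f_lin : is_linear f.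

Let fL : {linear G -> H} := HB.pack f (GRing.isLinear.Build C G H *:%R f f_lin).

Lemma is_linear0 : f 0 = 0.
Proof. exact: (raddf0 fL). Qed.

Lemma is_linearN x : f (- x) = - f x.
Proof. exact: (raddfN fL). Qed.

Lemma is_linearB x y : f (x - y) = f x - f y.
Proof. exact: (raddfB fL). Qed.

Lemma is_linearZ c x : f (c *: x) = c *: f x.
Proof. exact: (linearZ_LR fL). Qed.

End LinearMaps.

Section HamelSpace.
Variables (C : realFieldType) (G : lmodType C) (lt0 lt1 : rel G) (v : G -> option G).
Hypothesis HS : hamel_space lt0 lt1 v.

Lemma hamel_ovs0 : ordered_vs lt0. Proof. by case: HS => [[]]. Qed.
Lemma hamel_ovs1 : ordered_vs lt1. Proof. by case: HS => [[]]. Qed.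
Lemma hamel_sto0 : strict_total_order lt0. Proof. by case: hamel_ovs0. Qed.

Lemma val_None x : v x = None <-> x = 0. Proof. by case: HS => _ []. Qed.
Lemma val0 : v 0 = None. Proof. exact/val_None. Qed.
Lemma val_ultra x y : ole lt0 (omin lt0 (v x) (v y)) (v (x + y)).
Proof. by case: HS => _ [_ [+ _ _ _ _]]; apply. Qed.
Lemma valZ c x : c != 0 -> v (c *: x) = v x.
Proof. by case: HS => _ [_ [_ + _ _ _]]; apply. Qed.
Lemma val_anti x y : lt1 0 x -> lt1 x y -> ole lt0 (v y) (v x).
Proof. by case: HS => _ [_ [_ _ + _ _]]; apply. Qed.
Lemma val_idem x : vext v (v x) = v x.
Proof. by case: HS => _ [_ [_ _ _ + _]]; apply. Qed.
Lemma val_gt0 x : olt lt1 (Some 0) (v x).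
Proof. by case: HS => _ [_ [_ _ _ _ +]]; apply. Qed.

Lemma valN x : v (- x) = v x.
Proof. by rewrite -scaleN1r valZ // oppr_eq0 oner_eq0. Qed.

Lemma valD_strict a b : olt lt0 (v a) (v b) -> v (a + b) = v a.
Proof.
move=> ab; have := val_ultra a b; rewrite /omin ab => /oleP[//|a_lt].
have := val_ultra (a + b) (- b); rewrite addrK valN => /(olt_nle hamel_sto0); case.
by rewrite /omin; case: ifP.
Qed.

Lemma val_lt1_subr_gt0 a b : lt1 0 a -> olt lt0 (v a) (v b) -> lt1 0 (a - b).
Proof.
move=> a0 ab; apply/(ovs_subr_gt0 hamel_ovs1).
case: (ovs_lt_total hamel_ovs1 a b) => [/(val_anti a0)|eab|//].
- by move/(olt_nle hamel_sto0): ab.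
- by move: ab; rewrite eab (negbTE (olt_irr hamel_sto0 _)).
Qed.

End HamelSpace.

Section CutExtension.
Variables (C : realFieldType) (G : lmodType C) (lt : rel G) (Q : G -> Prop).

Definition cut_point (x : G * C^o) : G := - (x.2^-1 *: x.1).

(* [(g, c)] stands for g + c h with h realising the cut Q, so for c <> 0 its sign is
   decided by the position of [cut_point (g, c)] = -g/c with respect to Q. *)
Definition cut_pos (x : G * C^o) : Prop :=
  if x.2 == 0 then (lt 0 x.1 : Prop)
  else if 0 < x.2 then Q (cut_point x) else ~ Q (cut_point x).

Definition cut_lt : rel (G * C^o) := fun x y => `[< cut_pos (y - x) >].

Definition cut_map (Gs : lmodType C) (i : G -> Gs) (hs : Gs) (x : G * C^o) : Gs :=
  i x.1 + x.2 *: hs.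

Hypotheses (ovs : ordered_vs lt) (Q_down : down_closed lt Q).

Lemma cut_point_scale (g q : G) (c : C) : c != 0 -> g + c *: q = c *: (q - cut_point (g, c)).
Proof. by move=> c0; rewrite opprK scalerDr scalerA divff // scale1r addrC. Qed.

Lemma cut_pos0 (g : G) : cut_pos (g, 0) <-> lt 0 g.
Proof. by rewrite /cut_pos eqxx. Qed.

Lemma cut_pos_gt0 (g : G) (c : C) : 0 < c ->
  cut_pos (g, c) <-> exists2 q, Q q & nonneg lt (g + c *: q).
Proof.
move=> c0; rewrite /cut_pos /= gt_eqF // c0; split=> [Qp|[q Qq]].
  exists (cut_point (g, c)) => //.
  by right; rewrite cut_point_scale ?gt_eqF // subrr scaler0.
rewrite cut_point_scale ?gt_eqF // (ovs_nonnegZE ovs _ c0) (ovs_nonneg_subr ovs) => -[|->//].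
by move/Q_down; apply.
Qed.

Lemma cut_pos_lt0 (g : G) (c : C) : c < 0 ->
  cut_pos (g, c) <-> exists2 r, ~ Q r & nonneg lt (g + c *: r).
Proof.
move=> c0; rewrite /cut_pos /= lt_eqF // ltNge (ltW c0) /=; split=> [nQp|[r nQr]].
  exists (cut_point (g, c)) => //.
  by right; rewrite cut_point_scale ?lt_eqF // subrr scaler0.
have nc0 : 0 < - c by rewrite oppr_gt0.
rewrite cut_point_scale ?lt_eqF // -opprB scalerN -scaleNr (ovs_nonnegZE ovs _ nc0).
by rewrite (ovs_nonneg_subr ovs) => -[/Q_down rp|<-//] /rp.
Qed.

Lemma cut_posD0 (g1 g2 : G) (c : C) : lt 0 g1 -> cut_pos (g2, c) -> cut_pos (g1 + g2, c).
Proof.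
move=> g1p; have shift q : nonneg lt (g2 + c *: q) -> nonneg lt (g1 + g2 + c *: q).
  by rewrite -addrA; left; exact: (ovs_addr_gt0_ge0 ovs).
case: (ltgtP c 0) => [cn|cp|->].
- by move=> /(cut_pos_lt0 g2 cn)[r nQr /shift n]; apply/(cut_pos_lt0 _ cn); exists r.
- by move=> /(cut_pos_gt0 g2 cp)[q Qq /shift n]; apply/(cut_pos_gt0 _ cp); exists q.
- by move=> /cut_pos0 g2p; apply/cut_pos0; exact: (ovs_addr_gt0 ovs).
Qed.

Lemma cut_posD_gt0 (g1 g2 : G) (c1 c2 : C) : 0 < c1 -> 0 < c2 ->
  cut_pos (g1, c1) -> cut_pos (g2, c2) -> cut_pos (g1 + g2, c1 + c2).
Proof.
move=> c1p c2p /(cut_pos_gt0 g1 c1p)[q1 Qq1 n1] /(cut_pos_gt0 g2 c2p)[q2 Qq2 n2].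
have [q Qq [q1q q2q]] := ovs_max2 ovs Qq1 Qq2.
apply/cut_pos_gt0; first exact: addr_gt0.
exists q => //; rewrite scalerDl addrACA.
apply: (ovs_nonnegD ovs).
- by apply: (ovs_addrZ_nonneg_le ovs _ n1 q1q); apply: ltW.
- by apply: (ovs_addrZ_nonneg_le ovs _ n2 q2q); apply: ltW.
Qed.

Lemma cut_posD_lt0 (g1 g2 : G) (c1 c2 : C) : c1 < 0 -> c2 < 0 ->
  cut_pos (g1, c1) -> cut_pos (g2, c2) -> cut_pos (g1 + g2, c1 + c2).
Proof.
move=> c1n c2n /(cut_pos_lt0 g1 c1n)[r1 nQr1 n1] /(cut_pos_lt0 g2 c2n)[r2 nQr2 n2].
have [r nQr [rr1 rr2]] := ovs_min2 ovs (R := fun r => ~ Q r) nQr1 nQr2.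
apply/cut_pos_lt0; first by rewrite -oppr_gt0 opprD addr_gt0 // oppr_gt0.
exists r => //; rewrite scalerDl addrACA.
apply: (ovs_nonnegD ovs).
- by apply: (ovs_addrZ_nonneg_ge ovs _ n1 rr1); apply: ltW.
- by apply: (ovs_addrZ_nonneg_ge ovs _ n2 rr2); apply: ltW.
Qed.

Lemma cut_posD_mixed (g1 g2 : G) (c1 c2 : C) : c1 < 0 -> 0 < c2 ->
  cut_pos (g1, c1) -> cut_pos (g2, c2) -> cut_pos (g1 + g2, c1 + c2).
Proof.
move=> c1n c2p /(cut_pos_lt0 g1 c1n)[r nQr n1] /(cut_pos_gt0 g2 c2p)[q Qq n2].
have qr : lt q r.
  case: (ovs_lt_total ovs q r) => [//|qr|/Q_down/(_ Qq)//]; by move: Qq; rewrite qr.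
have qr_nn : nonneg lt (r - q) by apply/(ovs_nonneg_subr ovs); left.
case: (ltgtP (c1 + c2) 0) => [sn|sp|s0].
- apply/(cut_pos_lt0 _ sn); exists r => //; rewrite scalerDl addrACA.
  by apply: (ovs_nonnegD ovs n1 (ovs_addrZ_nonneg_le ovs _ n2 qr_nn)); apply: ltW.
- apply/(cut_pos_gt0 _ sp); exists q => //; rewrite scalerDl addrACA.
  by apply: (ovs_nonnegD ovs (ovs_addrZ_nonneg_ge ovs _ n1 qr_nn) n2); apply: ltW.
- rewrite s0; apply/cut_pos0; have -> : g1 + g2 = (g1 + c1 *: r) + (g2 + c2 *: r).
    by rewrite addrACA -scalerDl s0 scale0r addr0.
  by rewrite addrC; exact: (ovs_addr_gt0_ge0 ovs (ovs_addrZ_gt0_lt ovs c2p n2 qr) n1).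
Qed.

Lemma cut_posD_pair (g1 g2 : G) (c1 c2 : C) :
  cut_pos (g1, c1) -> cut_pos (g2, c2) -> cut_pos (g1 + g2, c1 + c2).
Proof.
wlog c12 : g1 g2 c1 c2 / c1 <= c2.
  move=> wlog p1 p2; have [c12|c21] := leP c1 c2; first exact: wlog.
  by rewrite addrC [c1 + _]addrC; apply: wlog => //; apply: ltW.
case: (ltgtP c1 0) => [c1n|c1p|->].
- case: (ltgtP c2 0) => [c2n|c2p|->].
  + exact: cut_posD_lt0.
  + exact: cut_posD_mixed.
  + by move=> p1 /cut_pos0 g2p; rewrite addr0 addrC; exact: cut_posD0.
- by apply: cut_posD_gt0 => //; apply: lt_le_trans c12.
- by move=> /cut_pos0 g1p; rewrite add0r; exact: cut_posD0.
Qed.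

Lemma cut_posD x y : cut_pos x -> cut_pos y -> cut_pos (x + y).
Proof. by case: x y => [g1 c1] [g2 c2]; apply: cut_posD_pair. Qed.

Lemma cut_pos_total x : x != 0 -> cut_pos x \/ cut_pos (- x).
Proof.
case: x => g c nz; have pt_opp : cut_point (- g, - c) = cut_point (g, c).
  by rewrite /cut_point /= invrN scaleNr scalerN opprK.
rewrite /cut_pos /= oppr_eq0 oppr_gt0 pt_opp.
case: (ltgtP c 0) => [_|_|c0]; [by case: (EM (Q (cut_point (g, c)))); auto|exact: EM|].
have /eqP g0 : g != 0 by apply: contraNneq nz => g0; rewrite g0 c0.
by rewrite (ovs_oppr_gt0 ovs); case: (ovs_lt_total ovs 0 g) => [|/esym/g0|]; auto.
Qed.

Lemma cut_posZ (a : C) x : 0 < a -> cut_pos x -> cut_pos (a *: x).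
Proof.
case: x => g c a0; have -> : a *: (g, c) = (a *: g, a * c) :> G * C^o by [].
rewrite /cut_pos /= mulf_eq0 (gt_eqF a0) /= pmulr_rgt0 //.
have -> : cut_point (a *: g, a * c) = cut_point (g, c).
  by rewrite /cut_point /= invfM scalerA mulrAC mulVf ?mul1r // gt_eqF.
by case: ifP => // _; apply: ovs_scaler_gt0.
Qed.

Lemma cut_lt_ovs : ordered_vs cut_lt.
Proof.
split; first split.
- by move=> x; apply/negP => /asboolP; rewrite subrr /cut_pos eqxx; apply: (ovs_ltxx ovs).
- move=> x y z /asboolP xy /asboolP yz; apply/asboolP.
  by rewrite -[z](subrK y) -addrA; apply: cut_posD.
- move=> x y; case: (EM (x = y)) => [->|/eqP]; first by constructor 2.
  rewrite -subr_eq0 => /cut_pos_total[yx|xy]; [constructor 3|constructor 1].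
    exact/asboolP.
  by apply/asboolP; rewrite opprB in xy.
- by move=> x y z /asboolP xy; apply/asboolP; rewrite opprD addrACA subrr addr0.
- by move=> c x c0 /asboolP x0; apply/asboolP; rewrite !subr0 in x0 *; apply: cut_posZ.
Qed.

Lemma cut_lt_const a b : cut_lt (a, 0) (b, 0) = lt a b.
Proof. by apply/asboolP/idP; rewrite /cut_pos /= subrr eqxx (ovs_subr_gt0 ovs). Qed.

Lemma cut_lt_gen g : (Q g -> cut_lt (g, 0) (0, 1)) /\ (~ Q g -> cut_lt (0, 1) (g, 0)).
Proof.
split=> Qg; apply/asboolP; rewrite /cut_pos /cut_point /= !(subr0, sub0r).
  by rewrite oner_eq0 ltr01 invr1 scale1r opprK.
by rewrite oppr_eq0 oner_eq0 oppr_gt0 ltr10 invrN1 scaleN1r opprK.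
Qed.

Section CutMap.
Variables (Gs : lmodType C) (lts : rel Gs) (i : G -> Gs) (hs : Gs).

Lemma cut_map_const g : cut_map i hs (g, 0) = i g.
Proof. by rewrite /cut_map scale0r addr0. Qed.

Hypothesis i_lin : is_linear i.

Lemma cut_map_gen : cut_map i hs (0, 1) = hs.
Proof. by rewrite /cut_map is_linear0 // add0r scale1r. Qed.

Lemma cut_map_linear : is_linear (cut_map i hs).
Proof.
move=> c [g1 c1] [g2 c2]; rewrite /cut_map /=.
have -> : (c *: c1 + c2 : C^o) = c * c1 + c2 by [].
by rewrite i_lin scalerDl -scalerA scalerDr addrACA.
Qed.

Hypotheses (ovss : ordered_vs lts) (i_homo : {homo i : x y / lt x y >-> lts x y}).
Hypotheses (Q_below : forall q, Q q -> lts (i q) hs)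
  (Q_above : forall q, ~ Q q -> lts hs (i q)).

Lemma cut_map_pos x : cut_pos x -> lts 0 (cut_map i hs x).
Proof.
case: x => g c; rewrite /cut_pos /cut_map /=; case: ifP => [/eqP-> /i_homo|/negbT c0].
  by rewrite scale0r addr0 is_linear0.
have Eg : i g = - c *: i (cut_point (g, c)).
  by rewrite is_linearN // is_linearZ // scaleNr scalerN opprK scalerA mulfV // scale1r.
case: ifP => [cp /Q_below|cn /Q_above]; rewrite -(ovs_subr_gt0 ovss) => /(ovs_scaler_gt0 ovss).
  by move=> /(_ _ cp); rewrite scalerBr Eg scaleNr addrC.
have nc : 0 < - c by rewrite oppr_gt0 lt_neqAle c0 leNgt cn.
by move=> /(_ _ nc); rewrite scalerBr -Eg scaleNr opprK.
Qed.

Lemma cut_map_lt : {homo cut_map i hs : x y / cut_lt x y >-> lts x y}.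
Proof.
move=> x y /asboolP/cut_map_pos yx.
by apply/(ovs_subr_gt0 ovss); rewrite -(is_linearB cut_map_linear).
Qed.

End CutMap.

End CutExtension.

Section HamelExtension.
Variables (C : realFieldType) (G : lmodType C) (lt0 lt1 : rel G) (v : G -> option G).
Variables (alpha : G) (P P' : G -> Prop).

Local Notation ball := (cball lt0 v alpha).

(* Since v'(h) = alpha, h is infinitesimal with respect to every element outside
   the closed ball, so the <_1-cut of h is determined by P inside the ball and by
   the sign outside it. *)
Definition cut1 (x : G) : Prop := (ball x /\ P x) \/ (~ ball x /\ lt1 x 0).

Definition ext_lt0 : rel (G * C^o) := cut_lt lt0 P'.
Definition ext_lt1 : rel (G * C^o) := cut_lt lt1 cut1.
Definition ext_incl (g : G) : G * C^o := (g, 0).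
Definition ext_gen : G * C^o := (0, 1).
Definition ext_valG (x : G * C^o) : option G :=
  if x.2 == 0 then v x.1 else omin lt0 (v x.1) (Some alpha).
Definition ext_val (x : G * C^o) : option (G * C^o) := omap ext_incl (ext_valG x).

Hypotheses (HS : hamel_space lt0 lt1 v) (alpha_val : exists g, g != 0 /\ v g = Some alpha).
Hypotheses (P_cut : alpha_cut lt0 lt1 v alpha P) (P'_down : down_closed lt0 P').

Let ovs0 := hamel_ovs0 HS.
Let ovs1 := hamel_ovs1 HS.
Let sto0 := hamel_sto0 HS.

Lemma val_alpha : v alpha = Some alpha.
Proof. by case: alpha_val => g [_ vg]; have := val_idem HS g; rewrite vg. Qed.

Lemma alpha_gt0 : lt1 0 alpha.
Proof. by case: alpha_val => g [_ vg]; have := val_gt0 HS g; rewrite vg. Qed.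

Lemma ball0 : ball 0.
Proof. by rewrite /cball (val0 HS) /ole orbT. Qed.

Lemma nballE x : ~ ball x <-> olt lt0 (v x) (Some alpha).
Proof. by split=> [/(nole_olt sto0)|/(olt_nle sto0)]. Qed.

Lemma cut1_ball x : ball x -> cut1 x <-> P x.
Proof. by move=> bx; split=> [[[]|[]]|Px] //; left. Qed.

Lemma cut1_nball x : ~ ball x -> cut1 x <-> lt1 x 0.
Proof. by move=> nbx; split=> [[[]|[]]|x0] //; right. Qed.

Lemma cut1_down : down_closed lt1 cut1.
Proof.
case: P_cut => _ P_down _ x y yx [[bx Px]|[nbx x0]].
- case: (EM (ball y)) => [by_|nby]; first by left; split=> //; apply: P_down bx by_ yx Px.
  right; split=> //; case: (ovs_lt_total ovs1 y 0) => [//|y0|y0].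
    by case: nby; rewrite y0 ball0.
  by case: nby; apply: (ole_trans sto0) bx (val_anti HS y0 yx).
- right; split; last exact: ovs_lt_trans yx x0.
  move=> by_; apply: nbx; apply: (ole_trans sto0) by_ _.
  have /(ovs_oppr_gt0 ovs1) x0' := x0.
  have yx' : lt1 (- x) (- y).
    by apply/(ovs_subr_gt0 ovs1); rewrite opprK addrC (ovs_subr_gt0 ovs1).
  by have := val_anti HS x0' yx'; rewrite !(valN HS).
Qed.

Let ovs_ext0 : ordered_vs ext_lt0 := cut_lt_ovs ovs0 P'_down.
Let ovs_ext1 : ordered_vs ext_lt1 := cut_lt_ovs ovs1 cut1_down.

Lemma ext_incl_inj : injective ext_incl.
Proof. by move=> a b []. Qed.

Lemma ext_lt0_incl : {mono ext_incl : a b / lt0 a b >-> ext_lt0 a b}.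
Proof. exact: cut_lt_const ovs0. Qed.

Lemma ext_lt1_incl : {mono ext_incl : a b / lt1 a b >-> ext_lt1 a b}.
Proof. exact: cut_lt_const ovs1. Qed.

Lemma ext_valG_le g (c : C^o) : ole lt0 (ext_valG (g, c)) (v g).
Proof. by rewrite /ext_valG; case: ifP => _; [apply: ole_refl|apply: omin_l]. Qed.

Lemma ext_valG_le_alpha g (c : C^o) : c != 0 -> ole lt0 (ext_valG (g, c)) (Some alpha).
Proof. by rewrite /ext_valG => /negbTE->; apply: omin_r. Qed.

Lemma ext_valG_ultra x y :
  ole lt0 (omin lt0 (ext_valG x) (ext_valG y)) (ext_valG (x + y)).
Proof.
case: x y => [g1 c1] [g2 c2].
have -> : (g1, c1) + (g2, c2) = (g1 + g2, c1 + c2) :> G * C^o by [].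
have le_v : ole lt0 (omin lt0 (ext_valG (g1, c1)) (ext_valG (g2, c2))) (v (g1 + g2)).
  have le_min := omin_mono sto0 (ext_valG_le g1 c1) (ext_valG_le g2 c2).
  exact: (ole_trans sto0 le_min (val_ultra HS g1 g2)).
rewrite {3}/ext_valG /=; case: ifP => // c12; apply: omin_glb le_v _.
case: (eqVneq c1 0) => [c10|c10].
  have c20 : c2 != 0 by apply: contraFneq c12 => ->; rewrite c10 addr0.
  exact: (ole_trans sto0 (omin_r _ _ _) (ext_valG_le_alpha _ c20)).
exact: (ole_trans sto0 (omin_l sto0 _ _) (ext_valG_le_alpha _ c10)).
Qed.

Lemma ext_valGZ c x : c != 0 -> ext_valG (c *: x) = ext_valG x.
Proof.
case: x => g d c0; have -> : c *: (g, d) = (c *: g, c * d) :> G * C^o by [].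
by rewrite /ext_valG /= mulf_eq0 (negbTE c0) /= (valZ HS).
Qed.

Lemma ext_valG_idem x : vext v (ext_valG x) = ext_valG x.
Proof.
rewrite /ext_valG; case: ifP => _; first exact: (val_idem HS).
by rewrite /omin; case: ifP => _; [exact: (val_idem HS)|exact: val_alpha].
Qed.

Lemma ext_valG_None x : ext_valG x = None <-> x = 0.
Proof.
case: x => g c; rewrite /ext_valG /=; case: (eqVneq c 0) => [->|c0].
  by rewrite (val_None HS); split=> [->|/(congr1 fst)].
split=> [/omin_Some//|/(congr1 snd)/= c00].
by rewrite c00 eqxx in c0.
Qed.

Lemma cut1_dominant g (c : C) : c != 0 -> olt lt0 (v g) (Some alpha) ->
  cut_pos lt1 cut1 (g, c) <-> lt1 0 g.
Proof.
move=> c0 vg; set p := cut_point (g, c).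
have vp : v p = v g by rewrite /p /cut_point /= (valN HS) (valZ HS) ?invr_eq0.
have cut1p : cut1 p <-> lt1 p 0 by apply: cut1_nball; apply/nballE; rewrite vp.
have p0 : p != 0 by apply/eqP => p0; move: vg; rewrite -vp p0 (val0 HS).
rewrite /cut_pos /= -/p; case: (ltgtP c 0) c0 => [cn|cp|] //= _; rewrite cut1p.
- rewrite (ovs_nlt0_gt0 ovs1 p0) /p /cut_point /= -scaleNr (ovs_scaler_gt0E ovs1) //.
  by rewrite oppr_gt0 invr_lt0.
- by rewrite -(ovs_oppr_gt0 ovs1) opprK (ovs_scaler_gt0E ovs1) // invr_gt0.
Qed.

Lemma cut1_shift p e : olt lt0 (omin lt0 (v p) (Some alpha)) (v e) -> cut1 p <-> cut1 (p + e).
Proof.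
case: P_cut => _ _ P_inv; rewrite /omin; case: ifP => [vp ve|vp ae].
  have vpe : v (p + e) = v p := valD_strict HS ve.
  rewrite (cut1_nball (proj2 (nballE p) vp)) cut1_nball; last by apply/nballE; rewrite vpe.
  rewrite -!(ovs_oppr_gt0 ovs1) opprD; split=> [np|npe].
    by apply: (val_lt1_subr_gt0 HS np); rewrite (valN HS).
  have vpe' : olt lt0 (v (- p - e)) (v (- e)) by rewrite -opprD !(valN HS) vpe.
  by have := val_lt1_subr_gt0 HS npe vpe'; rewrite opprK subrK.
have bp : ball p by case: (ole_total sto0 (Some alpha) (v p)) => // vp'; rewrite vp' in vp.
have bpe : ball (p + e).
  have le_min : ole lt0 (Some alpha) (omin lt0 (v p) (v e)).
    by apply: omin_glb => //; apply: olt_ole.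
  exact: (ole_trans sto0 le_min (val_ultra HS p e)).
rewrite (cut1_ball bp) (cut1_ball bpe); apply: P_inv => //.
by rewrite /oball opprD addNKr (valN HS).
Qed.

Lemma ext_lt1_of_val a b :
  ext_lt1 0 a -> olt lt0 (ext_valG a) (ext_valG b) -> ext_lt1 b a.
Proof.
rewrite /ext_lt1 /cut_lt subr0 => /asboolP pa ab; apply/asboolP; move: ab pa.
case: a b => [g1 c1] [g2 c2].
have -> : (g1, c1) - (g2, c2) = (g1 - g2, c1 - c2) :> G * C^o by [].
rewrite /ext_valG /=; case: (eqVneq c1 0) => [->|c10]; case: (eqVneq c2 0) => [->|c20].
- rewrite subrr => v12 /cut_pos0 g1p.
  by apply/cut_pos0; exact: (val_lt1_subr_gt0 HS g1p).
- move=> /(olt_omin sto0)[v12 v1a] /cut_pos0 g1p; rewrite sub0r.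
  have v1 : v (g1 - g2) = v g1 by apply: (valD_strict HS); rewrite (valN HS).
  have v12a : olt lt0 (v (g1 - g2)) (Some alpha) by rewrite v1.
  by apply/(cut1_dominant _ v12a); [rewrite oppr_eq0|exact: (val_lt1_subr_gt0 HS g1p)].
- rewrite subr0 => v12.
  have ept : cut_point (g1 - g2, c1) = cut_point (g1, c1) + c1^-1 *: g2.
    by rewrite /cut_point /= scalerBr opprB addrC.
  have shift : cut1 (cut_point (g1, c1)) <-> cut1 (cut_point (g1 - g2, c1)).
    by rewrite ept; apply: cut1_shift; rewrite /cut_point (valN HS) !(valZ HS) ?invr_eq0.
  by rewrite /cut_pos /= (negbTE c10); case: ifP => _; rewrite shift.
- move=> /(olt_omin2 sto0)[v1a v12] /(cut1_dominant c10 v1a) g1p.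
  have v1 : v (g1 - g2) = v g1 by apply: (valD_strict HS); rewrite (valN HS).
  have g12 := val_lt1_subr_gt0 HS g1p v12.
  case: (eqVneq (c1 - c2) 0) => [->|c12]; first exact/cut_pos0.
  have v12a : olt lt0 (v (g1 - g2)) (Some alpha) by rewrite v1.
  exact/(cut1_dominant c12 v12a).
Qed.

Lemma ext_val_anti x y : ext_lt1 0 x -> ext_lt1 x y -> ole ext_lt0 (ext_val y) (ext_val x).
Proof.
move=> x0 xy; rewrite /ext_val (omap_ole ext_lt0_incl ext_incl_inj).
case: (ole_total sto0 (ext_valG y) (ext_valG x)) => // /(ext_lt1_of_val x0) yx.
by case: (ovs_lt_asym ovs_ext1 xy yx).
Qed.

Lemma ext_val_idem x : vext ext_val (ext_val x) = ext_val x.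
Proof.
rewrite /ext_val; have := ext_valG_idem x; case: (ext_valG x) => [a|] //= va.
by rewrite /ext_valG /= eqxx va.
Qed.

Lemma ext_val_gt0 x : olt ext_lt1 (Some 0) (ext_val x).
Proof.
rewrite /ext_val -[Some 0]/(omap ext_incl (Some 0)) (omap_olt ext_lt1_incl) /ext_valG.
case: ifP => _; first exact: (val_gt0 HS).
by rewrite /omin; case: ifP => _; [exact: (val_gt0 HS)|exact: alpha_gt0].
Qed.

Lemma ext_val_None x : ext_val x = None <-> x = 0.
Proof. by rewrite -ext_valG_None /ext_val; case: ext_valG. Qed.

Lemma hamel_space_ext : hamel_space ext_lt0 ext_lt1 ext_val.
Proof.
split; first by split.
split; first exact: ext_val_None.
split.
- move=> x y; rewrite /ext_val -(omap_omin ext_lt0_incl).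
  by rewrite (omap_ole ext_lt0_incl ext_incl_inj); apply: ext_valG_ultra.
- by move=> c x c0; rewrite /ext_val ext_valGZ.
- exact: ext_val_anti.
- exact: ext_val_idem.
- exact: ext_val_gt0.
Qed.

Lemma ext_incl_embedding : hamel_embedding lt0 lt1 v ext_lt0 ext_lt1 ext_val ext_incl.
Proof.
split.
- exact: ext_incl_inj.
- by move=> c x y; apply: injective_projections; rewrite //= scaler0 addr0.
- by move=> x y; rewrite ext_lt0_incl.
- by move=> x y; rewrite ext_lt1_incl.
- by move=> x; rewrite /ext_val /ext_valG eqxx.
Qed.

Lemma ext_gen_cut0 : (forall g, P' g -> ext_lt0 (ext_incl g) ext_gen) /\
  (forall g, ~ P' g -> ext_lt0 ext_gen (ext_incl g)).
Proof. by split=> g; have [] := cut_lt_gen lt0 P' g. Qed.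

Lemma ext_val_gen : ext_val ext_gen = Some (ext_incl alpha).
Proof. by rewrite /ext_val /ext_valG /= oner_eq0 (val0 HS) /omin. Qed.

Lemma ext_gen_cut1 : (forall g, P g -> ext_lt1 (ext_incl g) ext_gen) /\
  (forall g, ball g -> ~ P g -> ext_lt1 ext_gen (ext_incl g)).
Proof.
case: P_cut => P_ball _ _; split=> [g Pg|g bg nPg].
- by apply: (proj1 (cut_lt_gen lt1 cut1 g)); rewrite (cut1_ball (P_ball g Pg)).
- by apply: (proj2 (cut_lt_gen lt1 cut1 g)); rewrite (cut1_ball bg).
Qed.

Section Universal.
Variables (Gs : lmodType C) (lt0s lt1s : rel Gs) (vs : Gs -> option Gs).
Variables (i : G -> Gs) (hs : Gs).
Hypotheses (HSs : hamel_space lt0s lt1s vs) (i_emb : hamel_embedding lt0 lt1 v lt0s lt1s vs i).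
Hypotheses (P'_below : forall g, P' g -> lt0s (i g) hs)
  (P'_above : forall g, ~ P' g -> lt0s hs (i g)).
Hypothesis val_hs : forall (g : G) (c : C), c != 0 ->
  vs (i g + c *: hs) = omin lt0s (vs (i g)) (Some (i alpha)).
Hypotheses (P_below : forall g, P g -> lt1s (i g) hs)
  (P_above : forall g, ball g -> ~ P g -> lt1s hs (i g)).

Let ovs0s := hamel_ovs0 HSs.
Let ovs1s := hamel_ovs1 HSs.
Let i_lin : is_linear i. Proof. by case: i_emb. Qed.
Let i_lt0 : {homo i : x y / lt0 x y >-> lt0s x y}. Proof. by case: i_emb. Qed.
Let i_lt1 : {homo i : x y / lt1 x y >-> lt1s x y}. Proof. by case: i_emb. Qed.
Let i_val x : vs (i x) = omap i (v x). Proof. by case: i_emb. Qed.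

Lemma val_hs_alpha : vs hs = Some (i alpha).
Proof. by have := val_hs 0 (oner_neq0 C); rewrite is_linear0 // add0r scale1r (val0 HSs). Qed.

Lemma val_lt_hs q : olt lt0 (v q) (Some alpha) -> olt lt0s (vs (i q)) (vs hs).
Proof. by rewrite i_val val_hs_alpha; case: (v q) => [a /i_lt0|]. Qed.

Lemma cut1_below q : cut1 q -> lt1s (i q) hs.
Proof.
case=> [[_ Pq]|[nbq q0]]; first exact: P_below.
have iq0 : lt1s 0 (- i q).
  by apply/(ovs_oppr_gt0 ovs1s); rewrite -(is_linear0 i_lin); apply: i_lt1.
have : olt lt0s (vs (- i q)) (vs (- hs)) by rewrite !(valN HSs); apply/val_lt_hs/nballE.
by move=> /(val_lt1_subr_gt0 HSs iq0); rewrite opprK addrC => /(ovs_subr_gt0 ovs1s).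
Qed.

Lemma cut1_above q : ~ cut1 q -> lt1s hs (i q).
Proof.
move=> ncq; case: (EM (ball q)) => bq.
  by apply: P_above => // Pq; apply: ncq; left.
have q0 : lt1 0 q.
  case: (ovs_lt_total ovs1 q 0) => [q0|q0|//]; first by case: ncq; right.
  by case: bq; rewrite q0 ball0.
have iq0 : lt1s 0 (i q) by rewrite -(is_linear0 i_lin); apply: i_lt1.
have := val_lt1_subr_gt0 HSs iq0 (val_lt_hs (proj1 (nballE q) bq)).
by move/(ovs_subr_gt0 ovs1s).
Qed.

Lemma ext_map_embedding :
  hamel_embedding ext_lt0 ext_lt1 ext_val lt0s lt1s vs (cut_map i hs).
Proof.
have [sto_ext0 _ _] := ovs_ext0.
have i_mono0 := homo_total_mono sto0 (hamel_sto0 HSs) i_lt0.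
have k_lt0 := cut_map_lt i_lin ovs0s i_lt0 P'_below P'_above.
have k_incl o : omap (cut_map i hs) (omap ext_incl o) = omap i o.
  by case: o => //= a; rewrite /ext_incl cut_map_const.
split.
- exact: homo_total_inj sto_ext0 (hamel_sto0 HSs) k_lt0.
- exact: cut_map_linear.
- exact: k_lt0.
- exact: cut_map_lt i_lin ovs1s i_lt1 cut1_below cut1_above.
case=> g c; rewrite /ext_val k_incl /ext_valG /cut_map /=; case: eqP => [->|/eqP c0].
  by rewrite scale0r addr0 i_val.
by rewrite val_hs // i_val -[Some (i alpha)]/(omap i (Some alpha)) (omap_omin i_mono0).
Qed.

End Universal.

End HamelExtension.

Theorem lemma4p7 (C : realFieldType) (G : lmodType C) (lt0 lt1 : rel G)
    (v : G -> option G) (alpha : G) (P P' : G -> Prop) :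
  hamel_space lt0 lt1 v ->
  (exists g, g != 0 /\ v g = Some alpha) ->
  alpha_cut lt0 lt1 v alpha P ->
  down_closed lt0 P' ->
  exists (G' : lmodType C) (lt0' lt1' : rel G') (v' : G' -> option G')
         (j : G -> G') (h : G'),
    hamel_space lt0' lt1' v' /\
    [/\ hamel_embedding lt0 lt1 v lt0' lt1' v' j,
        (* (1) *)
        (forall g, P' g -> lt0' (j g) h) /\ (forall g, ~ P' g -> lt0' h (j g)),
        (* (2) *)
        v' h = Some (j alpha),
        (* (3) *)
        (forall g, P g -> lt1' (j g) h) /\
        (forall g, cball lt0 v alpha g -> ~ P g -> lt1' h (j g)) &
        (* (4) *)
        forall (Gs : lmodType C) (lt0s lt1s : rel Gs) (vs : Gs -> option Gs)
               (i : G -> Gs) (hs : Gs),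
          hamel_space lt0s lt1s vs ->
          hamel_embedding lt0 lt1 v lt0s lt1s vs i ->
          (forall g, P' g -> lt0s (i g) hs) ->
          (forall g, ~ P' g -> lt0s hs (i g)) ->
          (forall (g : G) (c : C), c != 0 ->
             vs (i g + c *: hs) = omin lt0s (vs (i g)) (Some (i alpha))) ->
          (forall (g : G) (c : C), c = 0 -> vs (i g + c *: hs) = vs (i g)) ->
          (forall g, P g -> lt1s (i g) hs) ->
          (forall g, cball lt0 v alpha g -> ~ P g -> lt1s hs (i g)) ->
          exists k : G' -> Gs,
            hamel_embedding lt0' lt1' v' lt0s lt1s vs k /\
            (forall g, k (j g) = i g) /\ k h = hs].
Proof.
move=> HS alpha_val P_cut P'_down.
exists (G * C^o)%type, (ext_lt0 lt0 P'), (ext_lt1 lt0 lt1 v alpha P), (ext_val lt0 v alpha).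
exists (@ext_incl C G), (@ext_gen C G); split; first exact: hamel_space_ext.
split.
- exact: ext_incl_embedding.
- exact: ext_gen_cut0.
- exact: ext_val_gen HS.
- exact: ext_gen_cut1.
move=> Gs lt0s lt1s vs i hs HSs i_emb P'_below P'_above val_hs _ P_below P_above.
exists (cut_map i hs); split; first exact: ext_map_embedding.
split=> [g|]; first exact: cut_map_const.
by apply: cut_map_gen; case: i_emb.
Qed.
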